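(* Let $k,t\ge1$ be integers, let $\mathcal L$ be a finite language of relation and/or constant symbols whose maximal relation arity is $r\ge2$, and let $\mathcal M$ be a totally $k$-bounded $\mathcal L$-structure containing an infinite component. Then there are an integer $t'$ with $t\le t'\le tr$ and a substructure $\mathcal M'$ of $\mathcal M$ such that $\mathcal M'$ has infinitely many distinct components of size $t'$.
   Context: An $\mathcal L$-structure $\mathcal M$ is totally $k$-bounded if for every relation symbol $R(x_1,\dots,x_s)$ of $\mathcal L$ and every partition $[s]=I\cup J$ into nonempty sets, for every assignment of the variables $\bar x_I$ in $M$ there are fewer than $k$ assignments of $\bar x_J$ with $\mathcal M\models R(x_1,\dots,x_s)$. Paths and components: a path from $a$ to $b$ is a finite sequence of tuples $\bar a_1,\dots,\bar a_m$ from $M$, each $\bar a_i$ in the interpretation of some relation symbol, consecutive tuples sharing an element, with $a$ in $\bar a_1$ and $b$ in $\bar a_m$; $A\subseteq M$ is connected if any two distinct elements of $A$ are joined by a path using only elements of $A$; a component is a nonempty connected set closed under paths. Substructures contain the interpretations of all constants. *)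

From Stdlib Require List.
From mathcomp Require Import all_boot.
Set Implicit Arguments. Unset Strict Implicit. Unset Printing Implicit Defensive.

Record language := Language {
  nrel : nat;
  arity : 'I_nrel -> nat;
  ncst : nat }.

Record structure (L : language) := Structure {
  carrier :> Type;
  rel : forall i : 'I_(nrel L), ('I_(arity i) -> carrier) -> Prop;
  cst : 'I_(ncst L) -> carrier }.

Section Defs.
Variables (L : language) (M : structure L).

Definition max_arity (r : nat) : Prop :=
  (exists i : 'I_(nrel L), arity i = r) /\ (forall i : 'I_(nrel L), arity i <= r).

(* Totally k-bounded: for every relation symbol R of arity s, every
   partition [s] = I u J into nonempty sets and every assignment of x_I,
   fewer than k assignments of x_J satisfy R.  An assignment of x_J
   extending f on I is represented by a full tuple agreeing with f on I;
   two such are distinct iff they differ at some coordinate. *)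
Definition totally_bounded (k : nat) : Prop :=
  forall (i : 'I_(nrel L)) (I : {set 'I_(arity i)}),
    I != set0 -> ~: I != set0 ->
    forall (f : 'I_(arity i) -> M) (n : nat) (h : 'I_n -> 'I_(arity i) -> M),
      (forall m, rel (h m)) ->
      (forall m j, j \in I -> h m j = f j) ->
      (forall m1 m2, (forall j, h m1 j = h m2 j) -> m1 = m2) ->
      n < k.

Definition tup := { i : 'I_(nrel L) & 'I_(arity i) -> M }.
Definition occurs (x : M) (u : tup) : Prop := exists j, projT2 u j = x.
Definition good (A : M -> Prop) (u : tup) : Prop :=
  rel (projT2 u) /\ forall j, A (projT2 u j).

Inductive rpath (A : M -> Prop) : M -> M -> Prop :=
| rpath_one (u : tup) (a b : M) :
    good A u -> occurs a u -> occurs b u -> rpath A a b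
| rpath_cons (u : tup) (a c b : M) :
    good A u -> occurs a u -> occurs c u -> rpath A c b -> rpath A a b.

(* A substructure is given by its domain A, which contains all constants;
   its relations are the restrictions, so paths in it are paths using only
   elements of A. *)
Definition substructure (A : M -> Prop) : Prop := forall c, A (cst M c).

Definition component (A C : M -> Prop) : Prop :=
  (forall x, C x -> A x) /\
  (exists x, C x) /\
  (forall a b, C a -> C b -> a <> b -> rpath C a b) /\
  (forall a b, C a -> rpath A a b -> C b).

Definition infinite_set (C : M -> Prop) : Prop :=
  ~ exists l : seq M, forall x, C x -> List.In x l.

Definition has_size (C : M -> Prop) (n : nat) : Prop :=
  exists l : seq M, List.NoDup l /\ List.length l = n /\ (forall x, C x <-> List.In x l).

Definition inf_many_components_of_size (A : M -> Prop) (n : nat) : Prop :=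
  forall N : nat, exists Cs : 'I_N -> M -> Prop,
    (forall m, component A (Cs m) /\ has_size (Cs m) n) /\
    (forall m1 m2, m1 <> m2 -> ~ (forall x, Cs m1 x <-> Cs m2 x)).

End Defs.

(* Total boundedness makes the structure locally finite: each element lies in finitely many
   relation tuples.  Hence deleting a finite set B together with its neighbours from the
   infinite component C leaves an infinite connected part, inside which connected sets of
   size between t and t + r - 2 can be grown, one tuple at a time, each new tuple sharing an
   element with the set built so far.  Choosing such sets P_0, P_1, ..., each avoiding the
   constants, the earlier sets and all their neighbours, every P_n is a whole component of
   the substructure spanned by the constants and the P_n; their sizes lie in
   [t, t + r - 2] within [t, t r], so by pigeonhole one size occurs infinitely often. *)

From Pilot Require Import Defs.
From mathcomp Require Import all_boot zify.
From Stdlib Require Import Classical ClassicalEpsilon FunctionalExtensionality.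

Set Implicit Arguments. Unset Strict Implicit. Unset Printing Implicit Defensive.

Lemma length_size (X : Type) (s : seq X) : List.length s = size s.
Proof. by elim: s => //= x s ->. Qed.

Lemma In_mem (T : eqType) (x : T) (s : seq T) : x \in s -> List.In x s.
Proof. by elim: s => //= y s IH; rewrite in_cons => /orP [/eqP ->|/IH]; [left|right]. Qed.

Lemma NoDup_union (X : Type) (S l : seq X) : List.NoDup S ->
  exists S', [/\ List.NoDup S', forall x, List.In x S' <-> List.In x S \/ List.In x l
            & List.length S' <= List.length S + List.length l].
Proof.
elim: l S => [|a l IH] S ndS.
  by exists S; split=> [|x|/=]; [|split; [left|case]|rewrite addn0].
have [aS|aS] := classic (List.In a S).
- have [S' [nd' HS' len']] := IH S ndS; exists S'; split=> //=; last lia.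
  by move=> x; rewrite HS' /=; split; [tauto|case=> [|[<-|]]; tauto].
- have [S' [nd' HS' len']] := IH (a :: S) (List.NoDup_cons _ aS ndS).
  exists S'; split=> /=; [done| |by rewrite /= in len'; lia].
  by move=> x; rewrite HS' /=; tauto.
Qed.

Definition finite_set (X : Type) (P : X -> Prop) := exists s : seq X, forall x, P x -> List.In x s.

Section FiniteSets.
Variable X : Type.
Implicit Types P Q : X -> Prop.

Lemma finite_setS P Q : (forall x, P x -> Q x) -> finite_set Q -> finite_set P.
Proof. by move=> PQ [s Hs]; exists s => x /PQ /Hs. Qed.

Lemma finite_setU P Q : finite_set P -> finite_set Q -> finite_set (fun x => P x \/ Q x).
Proof.
move=> [s Hs] [s' Hs']; exists (s ++ s') => x Hx.
by apply: List.in_or_app; case: Hx => [/Hs|/Hs']; [left|right].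
Qed.

Lemma finite_set_bounded P (k : nat) :
  (forall s, List.NoDup s -> (forall x, List.In x s -> P x) -> List.length s < k) ->
  finite_set P.
Proof.
move=> Hk; apply: NNPP => Pinf.
have long n : exists s, [/\ List.NoDup s, forall x, List.In x s -> P x & List.length s = n].
  elim: n => [|n [s [nds sP <-]]]; first by exists [::]; split=> //; constructor.
  have [x [Px xs]] : exists x, P x /\ ~ List.In x s.
    apply: NNPP => H; apply: Pinf; exists s => x Px.
    by apply: NNPP => xs; apply: H; exists x.
  by exists (x :: s); split=> //= [|y [<-|/sP]] //; constructor.
by have [s [nds sP len]] := long k; move: (Hk s nds sP); rewrite len ltnn.
Qed.

End FiniteSets.

Lemma finite_set_bigcup_seq (X Y : Type) (xs : seq X) (F : X -> Y -> Prop) :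
  (forall x, List.In x xs -> finite_set (F x)) ->
  finite_set (fun y => exists2 x, List.In x xs & F x y).
Proof.
elim: xs => [|x xs IH] HF; first by exists [::] => y [].
have [s Hs] := HF x (or_introl erefl).
have [s' Hs'] := IH (fun x' Hx' => HF x' (or_intror Hx')).
exists (s ++ s') => y [x' [<-|Hx'] Fy]; apply: List.in_or_app; first by left; apply: Hs.
by right; apply: Hs'; exists x'.
Qed.

Lemma finite_set_bigcup (X Y : Type) (P : X -> Prop) (F : X -> Y -> Prop) :
  finite_set P -> (forall x, P x -> finite_set (F x)) ->
  finite_set (fun y => exists2 x, P x & F x y).
Proof.
move=> [s Hs] HF.
have [x _|s' Hs'] := @finite_set_bigcup_seq _ _ s (fun x y => P x /\ F x y).
  have [/HF Fx|nPx] := classic (P x); last by exists [::] => y [].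
  by apply: (finite_setS _ Fx) => y [].
by exists s' => y [x Px Fy]; apply: Hs'; exists x; [apply: Hs|].
Qed.

Lemma finite_set_fin (T : finType) (P : T -> Prop) : finite_set P.
Proof. by exists (enum T) => x _; apply: In_mem; rewrite mem_enum. Qed.

Section Paths.
Variables (L : language) (M : structure L).
Implicit Types (A S : M -> Prop) (u : tup M) (a b x y : M).

Lemma rpath_sub A S a b : (forall x, A x -> S x) -> rpath A a b -> rpath S a b.
Proof.
move=> AS; have goodS u : good A u -> good S u by case=> Hr Hu; split=> // j; apply: AS.
elim=> [u x y /goodS G ox oy|u x c y /goodS G ox oc _ IH].
- exact: rpath_one G ox oy.
- exact: rpath_cons G ox oc IH.
Qed.

Lemma rpath_trans A a c b : rpath A a c -> rpath A c b -> rpath A a b.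
Proof.
elim=> [u x y G ox oy | u x d y G ox od _ IH] H.
- exact: rpath_cons G ox oy H.
- exact: rpath_cons G ox od (IH H).
Qed.

Lemma rpath_sym A a b : rpath A a b -> rpath A b a.
Proof.
elim=> [u x y G ox oy | u x d y G ox od _ IH].
- exact: rpath_one G oy ox.
- exact: rpath_trans IH (rpath_one G od ox).
Qed.

Lemma rpath_endpoints A a b : rpath A a b -> A a /\ A b.
Proof. by elim=> [u x y [_ Au] [j <-] [j' <-]|u x c y [_ Au] [j <-] _ _ [_ Ay]]. Qed.

Lemma rpath_exit A S a b : rpath A a b -> S a -> ~ S b ->
  exists u, [/\ good A u, exists j, S (projT2 u j) & exists j, ~ S (projT2 u j)].
Proof.
elim=> [u x y G [j1 <-] [j2 <-] | u x c y G [j1 <-] [j2 Ec] _ IH] Sx nSy.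
- by exists u; split=> //; [exists j1|exists j2].
- have [Sc|nSc] := classic (S c); first exact: IH Sc nSy.
  by exists u; split=> //; [exists j1|exists j2; rewrite Ec].
Qed.

Lemma rpath_closed A S :
  (forall u, good A u -> (exists j, S (projT2 u j)) -> forall j, S (projT2 u j)) ->
  forall a b, S a -> rpath A a b -> S b.
Proof.
move=> closed a b Sa H; elim: H Sa => [u x y G [j <-] [j' <-]|u x c y G [j <-] [j' <-] _ IH] Sx.
- by apply: closed G _ j'; exists j.
- by apply: IH; apply: closed G _ j'; exists j.
Qed.

Definition linked A a b := a = b \/ rpath A a b.

Lemma linked_trans A a c b : linked A a c -> linked A c b -> linked A a b.
Proof. by case=> [->|H1] // [<-|H2]; right => //; apply: rpath_trans H1 H2. Qed.

Lemma linked_sym A a b : linked A a b -> linked A b a.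
Proof. by case=> [->|H]; [left|right; apply: rpath_sym]. Qed.

Lemma linked_dom A y x : A y -> linked A y x -> A x.
Proof. by move=> Ay [<-//|H]; case: (rpath_endpoints H). Qed.

Definition connected_on A := forall a b, A a -> A b -> linked A a b.

Lemma rpath_linked_class A y a b : linked A y a -> rpath A a b -> rpath (linked A y) a b.
Proof.
have good_class u c : good A u -> occurs c u -> linked A y c -> good (linked A y) u.
  move=> G oc yc; split=> [|j]; first by case: G.
  by apply: linked_trans yc _; right; apply: (rpath_one G oc); exists j.
move=> ya H; elim: H ya => [u x z G ox oz|u x c z G ox oc _ IH] yx.
- exact: rpath_one (good_class _ _ G ox yx) ox oz.
- have yc : linked A y c by apply: linked_trans yx _; right; apply: rpath_one G ox oc.
  exact: rpath_cons (good_class _ _ G ox yx) ox oc (IH yc).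
Qed.

Lemma linked_class_connected A y : connected_on (linked A y).
Proof.
have from_y a : linked A y a -> linked (linked A y) y a.
  by case=> [<-|H]; [left|right; apply: rpath_linked_class H; left].
by move=> a b /from_y ya /from_y yb; apply: linked_trans (linked_sym ya) yb.
Qed.

Lemma component_of A S : (forall x, S x -> A x) -> (exists x, S x) -> connected_on S ->
  (forall u, good A u -> (exists j, S (projT2 u j)) -> forall j, S (projT2 u j)) ->
  component A S.
Proof.
move=> SA Sne Sconn Sclosed; split=> //; split=> //; split; last exact: rpath_closed.
by move=> a b Sa Sb ab; case: (Sconn a b Sa Sb).
Qed.

End Paths.

Section LocalFiniteness.
Variables (L : language) (M : structure L) (k : nat).
Hypothesis bounded : totally_bounded M k.

Definition adjacent (x y : M) :=
  exists u : tup M, [/\ Defs.rel (projT2 u), occurs x u & occurs y u].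

Definition nbhd (B : seq M) (y : M) := exists2 b, List.In b B & b = y \/ adjacent b y.

Lemma finite_tuples_at (i : 'I_(nrel L)) (j : 'I_(arity i)) (x : M) : 1 < arity i ->
  finite_set (fun h : 'I_(arity i) -> M => Defs.rel h /\ h j = x).
Proof.
move=> ai; apply: (finite_set_bounded (k := k)) => hs nd hsP.
pose h (m : 'I_(List.length hs)) := List.nth m hs (fun _ => x).
have hP m : Defs.rel (h m) /\ h m j = x by apply: hsP; apply: List.nth_In; apply/ltP.
apply: (@bounded i [set j] _ _ (fun _ => x) _ h).
- by apply/set0Pn; exists j; rewrite inE.
- by rewrite -card_gt0 cardsC1 card_ord; lia.
- by move=> m; case: (hP m).
- by move=> m j'; rewrite inE => /eqP ->; case: (hP m).
- move=> m1 m2 /functional_extensionality E; apply: val_inj.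
  by apply: (proj1 (List.NoDup_nth hs _) nd) E; apply/ltP.
Qed.

Lemma finite_adjacent (x : M) : finite_set (adjacent x).
Proof.
pose F (i : 'I_(nrel L)) (y : M) :=
  exists2 j : 'I_(arity i), True & exists2 h, Defs.rel h /\ h j = x & exists p, h p = y.
apply: (@finite_setS _ _ (fun y => exists2 i, True & F i y)).
  move=> y [[i h] [/= Hr [j hj] [p hp]]].
  by exists i => //; exists j => //; exists h => //; exists p.
apply: finite_set_bigcup => [|i _]; first exact: finite_set_fin.
have [ai|ai] := leqP (arity i) 1.
- exists [:: x] => y [j _ [h [_ <-] [p <-]]]; left; congr (h _).
  by apply: ord_inj; have := ltn_ord p; have := ltn_ord j; lia.
- apply: finite_set_bigcup => [|j _]; first exact: finite_set_fin.
  apply: finite_set_bigcup => [|h _]; first exact: finite_tuples_at.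
  exists (map h (enum 'I_(arity i))) => _ [p <-].
  by apply: List.in_map; apply: In_mem; rewrite mem_enum.
Qed.

Lemma finite_nbhd (B : seq M) : finite_set (nbhd B).
Proof.
apply: finite_set_bigcup_seq => b _.
by apply: finite_setU (finite_adjacent b); exists [:: b] => y ->; left.
Qed.

End LocalFiniteness.

Section Pieces.
Variables (L : language) (M : structure L) (k r : nat).
Hypothesis bounded : totally_bounded M k.
Hypothesis arity_le : forall i : 'I_(nrel L), arity i <= r.
Hypothesis r_ge2 : 2 <= r.

Lemma rpath_enters_nbhd (A : M -> Prop) (B : seq M) a b :
  rpath A a b -> ~ List.In a B -> List.In b B ->
  exists w, [/\ linked (fun x => A x /\ ~ List.In x B) a w, nbhd B w, A w & ~ List.In w B].
Proof.
set AB := fun x => A x /\ ~ List.In x B => ab aB bB.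
have Aa : A a by case: (rpath_endpoints ab).
have [|u [[Hu Au] [j1 Sj1] [j2 nSj2]]] := rpath_exit (S := linked AB a) ab (or_introl erefl).
  by move=> /(linked_dom (conj Aa aB)) [].
have [[p Bp]|offB] := classic (exists p, List.In (projT2 u p) B).
- have [Aw nBw] := linked_dom (conj Aa aB) Sj1.
  exists (projT2 u j1); split=> //; exists (projT2 u p) => //.
  by right; exists u; split=> //; [exists p|exists j1].
- case: nSj2; apply: linked_trans Sj1 _; right.
  apply: (@rpath_one _ _ _ u); [|by exists j1|by exists j2].
  by split=> // j; split=> [|Bj]; [apply: Au|apply: offB; exists j].
Qed.

Lemma infinite_linked_class_outside (C : M -> Prop) (B : seq M) :
  (forall a b, C a -> C b -> a <> b -> rpath C a b) -> infinite_set C ->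
  exists y, [/\ C y, ~ List.In y B & infinite_set (linked (fun x => C x /\ ~ List.In x B) y)].
Proof.
set CB := fun x => C x /\ ~ List.In x B => Cconn Cinf; apply: NNPP => H.
have fin w : CB w -> finite_set (linked CB w).
  by case=> Cw nBw; apply: NNPP => winf; apply: H; exists w.
have [c0 Cc0] : exists c0, C c0.
  by apply: NNPP => H0; apply: Cinf; exists [::] => x Cx; apply: H0; exists x.
apply: Cinf.
have [[b [Bb Cb]]|offB] := classic (exists b, List.In b B /\ C b).
- apply: (@finite_setS _ _ (fun x => List.In x B \/ exists2 w, nbhd B w /\ CB w & linked CB w x)).
    move=> c Cc; have [|cB] := classic (List.In c B); [by left|right].
    have cb : c <> b by move=> E; apply: cB; rewrite E.
    have [w [cw Bw Cw nBw]] := rpath_enters_nbhd (Cconn c b Cc Cb cb) cB Bb.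
    by exists w; [|apply: linked_sym].
  apply: finite_setU; first by exists B.
  apply: finite_set_bigcup => [|w [_]]; last exact: fin.
  by apply: (finite_setS _ (finite_nbhd bounded B)) => w [].
- have CB_C x : C x -> CB x by move=> Cx; split=> // Bx; apply: offB; exists x.
  apply: (finite_setS _ (fin c0 (CB_C c0 Cc0))) => c Cc.
  have [->|c0c] := classic (c0 = c); first by left.
  by right; apply: rpath_sub (Cconn c0 c Cc0 Cc c0c).
Qed.

Lemma connected_subset_of_size (D : M -> Prop) y : D y -> connected_on D -> infinite_set D ->
  forall n, 0 < n -> exists S : seq M, [/\ List.NoDup S, forall x, List.In x S -> D x,
    connected_on (fun x => List.In x S) & n <= List.length S <= n + r - 2].
Proof.
move=> Dy Dconn Dinf; elim=> [//|n IH] _.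
have [->|n0] := eqVneq n 0.
  exists [:: y]; split=> [||a b [<-|[]] [<-|[]]|/=]; [|by move=> x [<-|[]]|by left|lia].
  by constructor; [case|constructor].
have [S [ndS SD Sconn lenS]] := IH ltac:(lia).
have [longS|shortS] := leqP n.+1 (List.length S); first by exists S; split=> //; lia.
have [z [Dz zS]] : exists z, D z /\ ~ List.In z S.
  apply: NNPP => H; apply: Dinf; exists S => x Dx.
  by apply: NNPP => xS; apply: H; exists x.
have [s sS] : exists s, List.In s S.
  by case: S {ndS SD Sconn shortS zS} lenS => [/=|s]; [lia|exists s; left].
have sz : rpath D s z by case: (Dconn s z (SD s sS) Dz) => // sz; rewrite sz in sS.
have [u [[Hu Du] [j1 Sj1] [j2 nSj2]]] := rpath_exit (S := fun x => List.In x S) sz sS zS.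
(* [projT2 u j1] is already in [S], so [u] contributes at most [arity - 1] new elements *)
pose l := map (projT2 u) (enum (predC1 j1)).
have lenl : List.length l <= r.-1.
  rewrite /l List.length_map length_size -cardE cardC1 card_ord.
  by have := arity_le (projT1 u); lia.
have [S' [ndS' S'E lenS']] := NoDup_union l ndS.
have S'u j : List.In (projT2 u j) S'.
  apply/S'E; have [->|jj1] := eqVneq j j1; [by left|right].
  by apply: List.in_map; apply: In_mem; rewrite mem_enum /= inE.
have to_j1 a : List.In a S' -> linked (fun x => List.In x S') a (projT2 u j1).
  case/S'E => [aS|/List.in_map_iff [j [<- _]]].
  - case: (Sconn a _ aS Sj1) => [->|P]; [by left|right].
    by apply: rpath_sub P => x xS; apply/S'E; left.
  - by right; apply: (@rpath_one _ _ _ u); [split|exists j|exists j1].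
exists S'; split=> //.
- by move=> x /S'E [/SD //|/List.in_map_iff [j [<- _]]].
- by move=> a b /to_j1 aj1 /to_j1 bj1; apply: linked_trans aj1 (linked_sym bj1).
- have : List.length (projT2 u j2 :: S) <= List.length S'.
    apply/leP; apply: List.NoDup_incl_length; first by constructor.
    by move=> x [<-|xS]; [|apply/S'E; left].
  by rewrite /= in lenS' *; lia.
Qed.

Lemma connected_piece_off_nbhd (C : M -> Prop) (t : nat) (B : seq M) : 0 < t ->
  (forall a b, C a -> C b -> a <> b -> rpath C a b) -> infinite_set C ->
  exists P : seq M, [/\ List.NoDup P, connected_on (fun x => List.In x P),
    forall x, List.In x P -> ~ nbhd B x & t <= List.length P <= t + r - 2].
Proof.
move=> t_gt0 Cconn Cinf; have [NB NBE] := finite_nbhd bounded B.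
have [y [Cy yNB Dinf]] := infinite_linked_class_outside NB Cconn Cinf.
have [P [ndP PD Pconn lenP]] :=
  connected_subset_of_size (or_introl erefl) (@linked_class_connected _ _ _ y) Dinf t_gt0.
by exists P; split=> // x /PD /(linked_dom (conj Cy yNB)) [_ xNB] /NBE.
Qed.

End Pieces.

Lemma bounded_inf_often (f : nat -> nat) (K : nat) : (forall n, f n <= K) ->
  exists v, forall N, exists2 n, N <= n & f n = v.
Proof.
suff eventually_le N0 : (forall n, N0 <= n -> f n <= K) ->
    exists v, forall N, exists2 n, N <= n & f n = v.
  by move=> fK; apply: (eventually_le 0) => n _.
elim: K N0 => [|K IH] N0 fK.
  exists 0 => N; exists (maxn N N0); first exact: leq_maxl.
  by have := fK (maxn N N0) (leq_maxr _ _); lia.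
have [often|rare] := classic (forall N, exists2 n, N <= n & f n = K.+1); first by exists K.+1.
have [N1 N1f] : exists N1, forall n, N1 <= n -> f n <> K.+1.
  apply: NNPP => H; apply: rare => N; apply: NNPP => H'; apply: H.
  by exists N => n Nn fn; apply: H'; exists n.
apply: (IH (maxn N0 N1)) => n Nn.
by have := fK n ltac:(lia); have := N1f n ltac:(lia); lia.
Qed.

Lemma inf_often_uniq_seq (P : nat -> Prop) : (forall N, exists2 n, N <= n & P n) ->
  forall N, exists s : seq nat, [/\ uniq s, size s = N & forall n, n \in s -> P n].
Proof.
move=> often; elim=> [|N [s [us <- sP]]]; first by exists [::].
have [n sn Pn] := often (\max_(i <- s) i).+1.
exists (n :: s); split=> //=; last by move=> m; rewrite in_cons => /orP [/eqP ->|/sP].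
rewrite us andbT; apply/negP => /(@leq_bigmax_seq _ _ xpredT id) /(_ isT).
by rewrite leqNgt sn.
Qed.

Section Stages.
Variables (L : language) (M : structure L) (K : seq M) (piece : seq M -> seq M).
Hypothesis piece_off_nbhd : forall B x, List.In x (piece B) -> ~ nbhd B x.

Fixpoint history (n : nat) : seq M :=
  if n is m.+1 then history m ++ piece (history m) else K.

Definition stage (n : nat) : seq M := piece (history n).

Definition union_stages (x : M) : Prop := List.In x K \/ exists n, List.In x (stage n).

Lemma history_mono m n x : m <= n -> List.In x (history m) -> List.In x (history n).
Proof.
elim: n => [|n IH]; first by rewrite leqn0 => /eqP ->.
rewrite leq_eqVlt => /orP [/eqP -> //|mn] xm /=.
by apply: List.in_or_app; left; apply: IH.
Qed.

Lemma stage_in_history m n x : m < n -> List.In x (stage m) -> List.In x (history n).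
Proof. by move=> mn xm; apply: (history_mono mn) => /=; apply: List.in_or_app; right. Qed.

Lemma stage_disjoint m n x : m <> n -> List.In x (stage m) -> ~ List.In x (stage n).
Proof.
have fresh a b y : a < b -> List.In y (stage a) -> ~ List.In y (stage b).
  by move=> ab ya /piece_off_nbhd; apply; exists y; [apply: stage_in_history ab ya|left].
move=> m_n xm xn; case: (ltngtP m n) => [mn|nm|mn]; last exact: m_n.
- exact: fresh mn xm xn.
- exact: fresh nm xn xm.
Qed.

Lemma stage_closed n (u : tup M) : good union_stages u ->
  (exists j, List.In (projT2 u j) (stage n)) -> forall j, List.In (projT2 u j) (stage n).
Proof.
(* Stage n avoids the neighbourhood of the earlier stages and the constants, and every later
   stage avoids the neighbourhood of stage n. *)
move=> [Hu Uu] [j0 a_n] j; set a := projT2 u j0 in a_n; set e := projT2 u j.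
have ae : adjacent a e by exists u; split=> //; [exists j0|exists j].
have ea : adjacent e a by exists u; split=> //; [exists j|exists j0].
have e_old : ~ List.In e (history n).
  by move=> en; apply: (piece_off_nbhd a_n); exists e; last right.
case: (Uu j) => [eK|[m e_m]].
  by case: e_old; apply: (@history_mono 0).
case: (ltngtP m n) => [mn|nm|<- //].
- by case: e_old; apply: stage_in_history mn e_m.
- by case: (piece_off_nbhd e_m); exists a; [apply: stage_in_history nm a_n|right].
Qed.

Hypothesis piece_uniq : forall B, List.NoDup (piece B).
Hypothesis piece_connected : forall B, connected_on (fun x => List.In x (piece B)).
Hypothesis piece_nonempty : forall B, exists x, List.In x (piece B).

Lemma stages_inf_many v : (forall N, exists2 n, N <= n & List.length (stage n) = v) ->
  inf_many_components_of_size union_stages v.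
Proof.
move=> often N; have [s [us sN sv]] := inf_often_uniq_seq often N.
exists (fun m x => List.In x (stage (nth 0 s m))); split=> [m|m1 m2 m12 E].
- have sm : nth 0 s m \in s by rewrite mem_nth // sN.
  split; last by exists (stage (nth 0 s m)); split; [apply: piece_uniq|split=> //; exact: sv].
  apply: component_of; [|exact: piece_nonempty|exact: piece_connected|exact: stage_closed].
  by move=> x xm; right; exists (nth 0 s m).
- have [x xm1] := piece_nonempty (history (nth 0 s m1)).
  apply: (stage_disjoint _ xm1 (proj1 (E x) xm1)) => /eqP.
  by rewrite nth_uniq ?sN // => /eqP /val_inj.
Qed.

End Stages.

Theorem mainTheorem10 (L : language) (M : structure L) (k t r : nat) :
  1 <= k -> 1 <= t -> 2 <= r -> max_arity L r ->
  totally_bounded M k ->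
  (exists C : M -> Prop, component (fun _ => True) C /\ infinite_set C) ->
  exists (t' : nat) (A : M -> Prop),
    t <= t' <= t * r /\ substructure A /\ inf_many_components_of_size A t'.
Proof.
move=> _ t_gt0 r_ge2 [_ arity_le] bounded [C [[_ [_ [Cconn _]]] Cinf]].
have pieceP B := connected_piece_off_nbhd bounded arity_le r_ge2 B t_gt0 Cconn Cinf.
pose piece B := proj1_sig (constructive_indefinite_description _ (pieceP B)).
have piece_spec B := proj2_sig (constructive_indefinite_description _ (pieceP B)).
have piece_nonempty B : exists x, List.In x (piece B).
  case: (piece_spec B) => _ _ _; rewrite -/(piece B).
  by case: (piece B) => [/=|x s _]; [lia|exists x; left].
pose K := map (cst M) (enum 'I_(ncst L)).
pose size_at n := List.length (stage K piece n).
have size_at_bounds n : t <= size_at n <= t + r - 2 by case: (piece_spec (history K piece n)).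
have [v often] := bounded_inf_often (fun n => proj2 (andP (size_at_bounds n))).
have [n0 _ size_n0] := often 0.
exists v, (union_stages K piece); split; [|split].
- by have := size_at_bounds n0; rewrite size_n0; nia.
- by move=> c; left; apply: List.in_map; apply: In_mem; rewrite mem_enum.
- apply: stages_inf_many often => [B x|B|B|]; last exact: piece_nonempty.
  + by case: (piece_spec B) => _ _ /(_ x).
  + by case: (piece_spec B).
  + by case: (piece_spec B).
Qed.
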